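(* With the relaxed barrier functions $\hat B_x$, $\hat B_u$, $\hat B_f$ and the numbers $\bar\beta_x(\delta)$, $\bar\beta_u(\delta)$, $\bar\beta_f(\delta)$ defined in the context, it holds that $\{x\in\mathbb{R}^n:\hat B_x(x)\le\bar\beta_x(\delta)\}\subseteq\mathcal{X}$, $\{u\in\mathbb{R}^m:\hat B_u(u)\le\bar\beta_u(\delta)\}\subseteq\mathcal{U}$, and $\{x\in\mathbb{R}^n:\hat B_f(x)\le\bar\beta_f(\delta)\}\subseteq\mathcal{X}_f$.
   Context: Constraint sets are (compact) polytopes $\mathcal{X}=\{x\in\mathbb{R}^n: C_xx\le d_x\}$, $\mathcal{U}=\{u\in\mathbb{R}^m: C_uu\le d_u\}$ with $C_x\in\mathbb{R}^{q_x\times n}$, $C_u\in\mathbb{R}^{q_u\times m}$, and $d_x,d_u$ with strictly positive entries; $C^i$ is the $i$-th row, $d^i$ the $i$-th entry. Relaxed logarithmic barrier: fix $\delta\in(0,1]$. The relaxing function $\beta(\cdot;\delta):(-\infty,\delta]\to\mathbb{R}$ is either $\beta_k(z;\delta)=\frac{k-1}{k}\big[\big(\frac{z-k\delta}{(k-1)\delta}\big)^k-1\big]-\ln\delta$ for some even integer $k\ge2$, or $\beta_e(z;\delta)=\exp(1-z/\delta)-1-\ln\delta$. Define $\hat B(z)=-\ln z$ for $z>\delta$ and $\hat B(z)=\beta(z;\delta)$ for $z\le\delta$. Relaxed recentered barriers: with $z_x^i(x)=-C_x^ix+d_x^i$, $\hat B_x(x)=\sum_{i=1}^{q_x}\hat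 B_{x,i}(x)$ where either (gradient recentering) $\hat B_{x,i}(x)=\hat B(z_x^i(x))+\ln d_x^i-C_x^ix/d_x^i$ for all $i$, or (weight recentering) $\hat B_{x,i}(x)=(1+w_x^i)(\hat B(z_x^i(x))+\ln d_x^i)$ with a vector $w_x\ge0$ satisfying $\sum_i(1+w_x^i)(C_x^i)^\top/d_x^i=0$; $\hat B_u$ is defined analogously from $C_u,d_u$ (and a weight vector $w_u$). $\delta$ is such that $\hat B_x(0)=\hat B_u(0)=0$ and $\nabla\hat B_x(0)=0$, $\nabla\hat B_u(0)=0$. Terminal set: $\mathcal{X}_f=\{x\in\mathbb{R}^n:\varphi(x)\le1\}$ where $\varphi:\mathbb{R}^n\to\mathbb{R}_{\ge0}$ is continuously differentiable, convex and positive definite, and $\varphi(A_Kx)\le\varphi(x)$ for all $x\in\mathcal{X}_f$, with $A_K=A+BK$ for a given gain $K$. The relaxed terminal barrier is $\hat B_f(x)=\hat B(1-\varphi(x))$, i.e. $-\ln(1-\varphi(x))$ if $1-\varphi(x)>\delta$ and $\beta(1-\varphi(x);\delta)$ otherwise. Define $\bar\beta_f(\delta)=\beta(0;\delta)$, $\bar\beta_x(\delta)=\min\{\hat B_x(x): x\in\mathbb{R}^n,\ C_x^ix=d_x^i$ for some $i\in\{1,\dots,q_x\}\}$ and $\bar\beta_u(\delta)=\min\{\hat B_u(u): C_u^ju=d_u^j$ for some $j\in\{1,\dots,q_u\}\}$. *)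

From HB Require Import structures.
From mathcomp Require Import all_boot all_order all_algebra.
From mathcomp Require Import all_classical all_reals all_analysis.
Set Implicit Arguments. Unset Strict Implicit. Unset Printing Implicit Defensive.
Import Order.TTheory GRing.Theory Num.Theory.
Import numFieldNormedType.Exports.
Local Open Scope classical_set_scope.
Local Open Scope ring_scope.

(* Choice of relaxing function beta(.;delta):
   RPoly k : beta_k (k must be an even integer >= 2), RExp : beta_e. *)
Inductive relax_kind := RPoly of nat | RExp.

Definition relax_kind_ok (rk : relax_kind) : Prop :=
  match rk with RPoly k => ~~ odd k /\ (2 <= k)%N | RExp => True end.

Section Barriers.
Variable R : realType.

Definition relax_beta (rk : relax_kind) (delta z : R) : R :=
  match rk with
  | RPoly k =>
      ((k%:R - 1) / k%:R) *
        (((z - k%:R * delta) / ((k%:R - 1) * delta)) ^+ k - 1) - ln delta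
  | RExp => expR (1 - z / delta) - 1 - ln delta
  end.

Definition relaxed_log (rk : relax_kind) (delta z : R) : R :=
  if delta < z then - ln z else relax_beta rk delta z.

Definition polytope (n q : nat) (C : 'M[R]_(q, n)) (d : 'cV[R]_q) : set 'cV[R]_n :=
  [set x | forall i : 'I_q, (C *m x) i 0 <= d i 0].

Inductive recenter (q : nat) := RGrad | RWeight of 'cV[R]_q.

Definition recenter_ok (n q : nat) (C : 'M[R]_(q, n)) (d : 'cV[R]_q)
  (rc : recenter q) : Prop :=
  match rc with
  | RGrad => True
  | RWeight w =>
      (forall i : 'I_q, 0 <= w i 0) /\
      \sum_(i < q) ((1 + w i 0) / d i 0) *: (row i C)^T = 0
  end.

Definition recentered_barrier (rk : relax_kind) (delta : R) (n q : nat)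
  (C : 'M[R]_(q, n)) (d : 'cV[R]_q) (rc : recenter q) (x : 'cV[R]_n) : R :=
  match rc with
  | RGrad =>
      \sum_(i < q) (relaxed_log rk delta (- (C *m x) i 0 + d i 0)
                      + ln (d i 0) - (C *m x) i 0 / d i 0)
  | RWeight w =>
      \sum_(i < q) ((1 + w i 0) *
                      (relaxed_log rk delta (- (C *m x) i 0 + d i 0) + ln (d i 0)))
  end.

(* \bar beta for a polytope barrier: min of the barrier over the union of
   the facet hyperplanes {x | C^i x = d^i} (taken as the infimum). *)
Definition barrier_level (rk : relax_kind) (delta : R) (n q : nat)
  (C : 'M[R]_(q, n)) (d : 'cV[R]_q) (rc : recenter q) : R :=
  inf [set recentered_barrier rk delta C d rc x |
        x in [set x : 'cV[R]_n | exists i : 'I_q, (C *m x) i 0 = d i 0]].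

Definition terminal_barrier (rk : relax_kind) (delta : R) (n : nat)
  (phi : 'cV[R]_n -> R) (x : 'cV[R]_n) : R :=
  relaxed_log rk delta (1 - phi x).

End Barriers.

From HB Require Import structures.
From mathcomp Require Import all_boot all_order all_algebra.
From mathcomp Require Import all_classical all_reals all_analysis.
From mathcomp Require Import ring lra.
Import Order.TTheory GRing.Theory Num.Theory.
Import numFieldNormedType.Exports.
Set Implicit Arguments. Unset Strict Implicit. Unset Printing Implicit Defensive.
Local Open Scope classical_set_scope.
Local Open Scope ring_scope.

(* All the relaxed barriers are strictly convex: [beta_k] and [beta_e] are
   strictly convex on [(-oo, delta]] and meet [- ln] at [delta] with the same
   value and slope, and recentering only adds positive weights and affine
   terms.  A convex barrier vanishing with zero derivative at [0] is
   nonnegative, and it lies strictly below its chord on the ray from [0] to a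
   point [x] violating a constraint; where this ray crosses the facet the
   barrier is therefore smaller than at [x], so [x] is above the minimum over
   the facets.  For the terminal barrier, the relaxed logarithm is strictly
   decreasing, so [phi x > 1] forces [B_f x = beta (1 - phi x) > beta 0]. *)

Section StrictSupport.
Variable R : realFieldType.
Implicit Types (D : set R) (f g : R -> R).

Definition strict_support D f g :=
  forall a z, D a -> D z -> z != a -> f a + g a * (z - a) < f z.

Lemma strict_support_le D f g : strict_support D f g ->
  forall a z, D a -> D z -> f a + g a * (z - a) <= f z.
Proof.
move=> fg a z Da Dz; have [->|za] := eqVneq z a; first by rewrite subrr mulr0 addr0.
exact/ltW/fg.
Qed.

Lemma sub_strict_support D D' f g :
  D' `<=` D -> strict_support D f g -> strict_support D' f g.
Proof. by move=> D'D fg a z /D'D Da /D'D Dz; apply: fg. Qed.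

Lemma eq_strict_support D f f' g g' :
  (forall z, D z -> f z = f' z) -> (forall z, D z -> g z = g' z) ->
  strict_support D f' g' -> strict_support D f g.
Proof. by move=> ff' gg' fg a z Da Dz za; rewrite !ff' ?gg' //; apply: fg. Qed.

Lemma strict_support_affine D f g (W p r alpha beta : R) : 0 < W -> p != 0 ->
  strict_support D f g ->
  strict_support [set z | D (p * z + r)]
    (fun z => W * f (p * z + r) + alpha + beta * z)
    (fun z => W * p * g (p * z + r) + beta).
Proof.
move=> W0 p0 fg a z /= Da Dz za.
have Zne : p * z + r != p * a + r.
  by rewrite (can_eq (addrK r)) (can_eq (mulKf p0)).
have := fg _ _ Da Dz Zne; rewrite -(ltr_pM2l W0) => lt.
have -> : W * f (p * a + r) + alpha + beta * a + (W * p * g (p * a + r) + beta) * (z - a)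
    = W * (f (p * a + r) + g (p * a + r) * (p * z + r - (p * a + r))) + alpha + beta * z.
  by ring.
by rewrite !ltrD2r.
Qed.

Lemma tangent_convex_comb f g (t u v : R) :
  let p := t * u + (1 - t) * v in
  f p = t * (f p + g p * (u - p)) + (1 - t) * (f p + g p * (v - p)).
Proof. by rewrite /=; ring. Qed.

Lemma strict_support_convex f g (t u v : R) : strict_support setT f g ->
  0 <= t <= 1 -> f (t * u + (1 - t) * v) <= t * f u + (1 - t) * f v.
Proof.
move=> fg /andP[t0 t1]; rewrite (tangent_convex_comb f g).
by apply: lerD; apply: ler_wpM2l; rewrite ?subr_ge0 //; apply: (strict_support_le fg).
Qed.

Lemma strict_support_strict_convex f g (t u v : R) : strict_support setT f g ->
  0 < t < 1 -> u != v -> f (t * u + (1 - t) * v) < t * f u + (1 - t) * f v.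
Proof.
move=> fg /andP[t0 t1] uv; rewrite (tangent_convex_comb f g).
have up : u != t * u + (1 - t) * v.
  rewrite -subr_eq0 (_ : _ - _ = (1 - t) * (u - v)); last by ring.
  by rewrite mulf_neq0 // ?subr_eq0 // gt_eqF.
apply: ltr_leD; first by rewrite ltr_pM2l //; apply: fg.
apply: ler_wpM2l; first by rewrite subr_ge0 ltW.
exact: (strict_support_le fg).
Qed.

Lemma strict_support_glue (c : R) f1 g1 f2 g2 :
  strict_support [set z | z <= c] f1 g1 -> strict_support [set z | c <= z] f2 g2 ->
  f1 c = f2 c -> g1 c = g2 c ->
  (forall a, a <= c -> g1 a <= g1 c) -> (forall a, c <= a -> g2 c <= g2 a) ->
  strict_support setT (fun z => if c < z then f2 z else f1 z)
                      (fun z => if c < z then g2 z else g1 z).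
Proof.
move=> s1 s2 fc gc g1le g2ge a z _ _ za.
case: (ltrP c a) => ca; case: (ltrP c z) => cz.
- by apply: s2; rewrite /= ?ltW.
- have h1 : f2 a + g2 a * (c - a) < f2 c by apply: s2; rewrite /= ?lexx ?ltW ?lt_eqF.
  have h2 : f1 c + g1 c * (z - c) <= f1 z by apply: (strict_support_le s1); rewrite /=.
  have h3 : g2 a * (z - c) <= g2 c * (z - c).
    by rewrite ler_wnM2r ?subr_le0 // g2ge // ltW.
  rewrite fc gc in h2; lra.
- have h1 : f1 a + g1 a * (c - a) <= f1 c by apply: (strict_support_le s1); rewrite /=.
  have h2 : f2 c + g2 c * (z - c) < f2 z by apply: s2; rewrite /= ?lexx ?ltW ?gt_eqF.
  have h3 : g1 a * (z - c) <= g1 c * (z - c).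
    by rewrite ler_wpM2r ?subr_ge0 ?g1le // ltW.
  rewrite fc gc in h1 h3; lra.
- exact: s1.
Qed.

End StrictSupport.

Section PowerTangent.
Variable R : realFieldType.

Lemma expr_tangent_gap (U V : R) n :
  V * (U ^+ n.+1 + n.+1%:R * U ^+ n * (V - U))
    - (U ^+ n.+2 + n.+2%:R * U ^+ n.+1 * (V - U))
  = n.+1%:R * U ^+ n * (V - U) ^+ 2.
Proof. by rewrite !exprS -[n.+2%:R]natr1; ring. Qed.

Lemma expr_tangent_le (U V : R) n : 0 <= U -> 0 <= V ->
  U ^+ n.+1 + n.+1%:R * U ^+ n * (V - U) <= V ^+ n.+1.
Proof.
move=> U0 V0; elim: n => [|n IH]; first by rewrite !expr1 expr0; lra.
apply: le_trans (ler_wpM2l V0 IH); rewrite -subr_ge0 expr_tangent_gap.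
rewrite mulr_ge0 // ?sqr_ge0 ?mulr_ge0 ?ler0n ?exprn_ge0 //.
Qed.

Lemma expr_tangent_lt (U V : R) n : 0 < U -> 0 <= V -> U != V ->
  U ^+ n.+2 + n.+2%:R * U ^+ n.+1 * (V - U) < V ^+ n.+2.
Proof.
move=> U0 V0 UV.
apply: lt_le_trans (ler_wpM2l V0 (expr_tangent_le n (ltW U0) V0)).
rewrite -subr_gt0 expr_tangent_gap; apply: mulr_gt0.
  by rewrite mulr_gt0 ?ltr0n ?exprn_gt0.
by rewrite exprn_even_gt0 //= subr_eq0 eq_sym.
Qed.

Lemma expr_even_strict_support n : ~~ odd n ->
  strict_support [set u : R | u < 0] (fun u => u ^+ n.+2) (fun u => n.+2%:R * u ^+ n.+1).
Proof.
move=> ev a z /= a0 z0 za.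
have even_opp (x : R) : (- x) ^+ n.+2 = x ^+ n.+2.
  by rewrite exprNn -signr_odd /= (negPf ev) expr0 mul1r.
have odd_opp : (- a) ^+ n.+1 = - a ^+ n.+1.
  by rewrite exprNn -signr_odd /= ev expr1 mulN1r.
have := @expr_tangent_lt (- a) (- z) n.
rewrite !even_opp odd_opp.
rewrite (_ : _ * - a ^+ n.+1 * _ = n.+2%:R * a ^+ n.+1 * (z - a)); last by ring.
apply; rewrite ?oppr_gt0 ?oppr_ge0 ?ltW //.
by rewrite eqr_opp eq_sym.
Qed.

End PowerTangent.

Section ExpLn.
Variable R : realType.

Lemma expR_strict_support : strict_support setT (@expR R) (@expR R).
Proof.
move=> a z _ _ za.
have -> : expR z = expR (z - a) * expR a by rewrite -expRD subrK.
have := expR_gt1Dx (_ : z - a != 0); rewrite subr_eq0 => /(_ za).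
rewrite -(ltr_pM2r (expR_gt0 a)); lra.
Qed.

Lemma oppr_ln_strict_support :
  strict_support [set z : R | 0 < z] (fun z => - ln z) (fun z => - z^-1).
Proof.
move=> a z /= a0 z0 za.
have lnne : ln z - ln a != 0.
  by rewrite subr_eq0; apply: contra za => /eqP/ln_inj-> //; rewrite posrE.
have := expR_gt1Dx lnne; rewrite expRB !lnK ?posrE //.
rewrite mulNr (_ : z / a = 1 + a^-1 * (z - a)); first lra.
by field; rewrite gt_eqF.
Qed.

End ExpLn.

Definition relax_beta_slope (R : realType) (rk : relax_kind) (delta z : R) : R :=
  match rk with
  | RPoly k => delta^-1 * ((z - k%:R * delta) / ((k%:R - 1) * delta)) ^+ k.-1
  | RExp => - delta^-1 * expR (1 - z / delta)
  end.

Section RelaxBeta.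
Variables (R : realType) (delta : R).
Hypothesis delta_gt0 : 0 < delta.

Lemma relax_beta_poly_strict_support n : ~~ odd n ->
  strict_support [set z | z <= delta]
    (relax_beta (RPoly n.+2) delta) (relax_beta_slope (RPoly n.+2) delta).
Proof.
move=> ev; set k : R := n.+2%:R.
have k1 : 0 < k - 1 by rewrite /k -natr1 addrK ltr0n.
set W := (k - 1) / k; set p := ((k - 1) * delta)^-1; set r := - (k * delta) * p.
have W0 : 0 < W by rewrite divr_gt0 // ltr0n.
have p0 : p != 0 by rewrite invr_eq0 mulf_neq0 // gt_eqF.
have uE z : (z - k * delta) / ((k - 1) * delta) = p * z + r by rewrite /r /p; ring.
apply: (eq_strict_support (f' := fun z => W * (p * z + r) ^+ n.+2 + (- W - ln delta) + 0 * z)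
                          (g' := fun z => W * p * (n.+2%:R * (p * z + r) ^+ n.+1) + 0)).
- by move=> z _; rewrite /relax_beta uE -/k /W; ring.
- move=> z _; rewrite /relax_beta_slope uE -/k /= /W /p; field.
  by rewrite !gt_eqF // ?ltr0n.
apply: sub_strict_support
  (strict_support_affine (r := r) (- W - ln delta) 0 W0 p0 (expr_even_strict_support ev)).
move=> z /= zd; rewrite -uE pmulr_llt0 ?invr_gt0 ?mulr_gt0 //.
have : 0 < (k - 1) * delta by rewrite mulr_gt0.
lra.
Qed.

Lemma relax_beta_exp_strict_support :
  strict_support setT (relax_beta RExp delta) (relax_beta_slope RExp delta).
Proof.
have p0 : - delta^-1 != 0 by rewrite oppr_eq0 invr_eq0 gt_eqF.
have uE z : 1 - z / delta = - delta^-1 * z + 1 by ring.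
apply: (eq_strict_support
  (f' := fun z => 1 * expR (- delta^-1 * z + 1) + (- 1 - ln delta) + 0 * z)
  (g' := fun z => 1 * - delta^-1 * expR (- delta^-1 * z + 1) + 0)).
- by move=> z _; rewrite /relax_beta uE; ring.
- by move=> z _; rewrite /relax_beta_slope uE; ring.
exact: (strict_support_affine (- 1 - ln delta) 0 ltr01 p0 (@expR_strict_support R)).
Qed.

End RelaxBeta.

Section RelaxedLog.
Variables (R : realType) (rk : relax_kind) (delta : R).
Hypotheses (rk_ok : relax_kind_ok rk) (delta_gt0 : 0 < delta).

Lemma relax_beta_strict_support :
  strict_support [set z | z <= delta] (relax_beta rk delta) (relax_beta_slope rk delta).
Proof.
move: rk_ok; case: rk => [[|[|n]] [ev _] //|_].
  by apply: relax_beta_poly_strict_support; rewrite //= negbK in ev.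
exact: sub_strict_support (relax_beta_exp_strict_support delta_gt0).
Qed.

Lemma relax_beta_delta : relax_beta rk delta delta = - ln delta.
Proof.
rewrite /relax_beta; move: rk_ok; case: rk => [[|[|n]] [ev _] //|_].
  rewrite (_ : (delta - _) / _ = -1); last by field; rewrite !gt_eqF //; lra.
  by rewrite -signr_odd /= negbK in ev *; rewrite ev expr0 subrr mulr0 add0r.
by rewrite divff ?gt_eqF // subrr expR0 subrr add0r.
Qed.

Lemma relax_beta_slope_delta : relax_beta_slope rk delta delta = - delta^-1.
Proof.
rewrite /relax_beta_slope; move: rk_ok; case: rk => [[|[|n]] [ev _] //|_].
  rewrite (_ : (delta - _) / _ = -1); last by field; rewrite !gt_eqF //; lra.
  by rewrite /= -signr_odd /= negbK in ev *; rewrite ev expr1 mulrN1.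
by rewrite divff ?gt_eqF // subrr expR0 mulr1.
Qed.

Lemma relax_beta_slope_le a : a <= delta -> relax_beta_slope rk delta a <= - delta^-1.
Proof.
rewrite /relax_beta_slope; move: rk_ok; case: rk => [[|[|n]] [ev _] //|_] ad.
  rewrite /= negbK in ev; set k : R := n.+2%:R.
  have kd : 0 < (k - 1) * delta by rewrite mulr_gt0 // /k -natr1 addrK ltr0n.
  set u := (a - k * delta) / ((k - 1) * delta).
  have u1 : 1 <= - u by rewrite /u -mulNr ler_pdivlMr //; lra.
  have : 1 <= (- u) ^+ n.+1 by rewrite exprn_ege1.
  rewrite exprNn -signr_odd /= ev expr1 mulN1r => un.
  by rewrite -mulrN1 ler_pM2l ?invr_gt0 //; lra.
have e1 : 1 <= expR (1 - a / delta).
  apply: le_trans (expR_ge1Dx _); rewrite lerDl subr_ge0.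
  by rewrite ler_pdivrMr // mul1r.
rewrite mulNr lerN2 -[X in X <= _]mulr1 ler_pM2l ?invr_gt0 //.
Qed.

Definition relaxed_log_slope (z : R) : R :=
  if delta < z then - z^-1 else relax_beta_slope rk delta z.

Lemma relaxed_log_strict_support :
  strict_support setT (relaxed_log rk delta) relaxed_log_slope.
Proof.
apply: strict_support_glue.
- exact: relax_beta_strict_support.
- by apply: sub_strict_support (@oppr_ln_strict_support R) => z /=; apply: lt_le_trans.
- exact: relax_beta_delta.
- exact: relax_beta_slope_delta.
- by move=> a; rewrite relax_beta_slope_delta; apply: relax_beta_slope_le.
- by move=> a da; rewrite lerN2 lef_pV2 ?posrE // (lt_le_trans delta_gt0).
Qed.

Lemma relaxed_log_slope_lt0 z : relaxed_log_slope z < 0.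
Proof.
rewrite /relaxed_log_slope; case: ifPn => [dz|].
  by rewrite oppr_lt0 invr_gt0 (lt_trans delta_gt0).
rewrite -leNgt => /relax_beta_slope_le /le_lt_trans; apply.
by rewrite oppr_lt0 invr_gt0.
Qed.

Lemma relaxed_log_decreasing a z : z < a -> relaxed_log rk delta a < relaxed_log rk delta z.
Proof.
move=> za; have := relaxed_log_strict_support I I (negbT (lt_eqF za)).
have : 0 < relaxed_log_slope a * (z - a).
  by rewrite nmulr_rgt0 ?relaxed_log_slope_lt0 ?subr_lt0.
lra.
Qed.

End RelaxedLog.

Lemma ray_convex_ge0 (R : realType) (V : normedModType R) (B : V -> R) :
  B 0 = 0 -> (forall x t, 0 < t < 1 -> B (t *: x) <= t * B x) ->
  differentiable B 0 -> (forall v, 'd B 0 v = 0) -> forall x, 0 <= B x.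
Proof.
move=> B00 Bray dB dB0 x.
have := cvg_dnbhs_at_right (@diff_derivable _ _ _ B 0 x dB).
rewrite -/(derive B 0 x) deriveE // dB0 => /cvgr_to_le; apply.
near=> t; rewrite /= addr0 B00 subr0.
have t01 : 0 < t < 1.
  by apply/andP; split; near: t; [exact: nbhs_right_gt | exact: nbhs_right_lt].
have t0 : 0 < t by case/andP: t01.
by rewrite -[_ *: _]/(t^-1 * _) ler_pdivrMl // Bray.
Unshelve. all: by end_near. Qed.

Section RowSeparable.
Variables (R : realType) (n q : nat) (C : 'M[R]_(q, n)).
Variables (sigma slope : 'I_q -> R -> R) (B : 'cV[R]_n -> R).
Hypothesis sigma_support : forall i, strict_support setT (sigma i) (slope i).
Hypothesis BE : forall x, B x = \sum_(i < q) sigma i ((C *m x) i 0).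

Lemma row_mulmxZ t (x : 'cV[R]_n) i : (C *m (t *: x)) i 0 = t * (C *m x) i 0.
Proof. by rewrite -scalemxAr mxE. Qed.

Lemma row_mulmx0 i : (C *m (0 : 'cV[R]_n)) i 0 = 0.
Proof. by rewrite mulmx0 mxE. Qed.

Lemma row_term_ray_le i t c : 0 <= t <= 1 ->
  sigma i (t * c) <= t * sigma i c + (1 - t) * sigma i 0.
Proof.
by move=> t01; have := strict_support_convex c 0 (sigma_support i) t01; rewrite mulr0 addr0.
Qed.

Lemma row_separable_ray_le x t : 0 <= t <= 1 -> B (t *: x) <= t * B x + (1 - t) * B 0.
Proof.
move=> t01; rewrite !BE !mulr_sumr -big_split /=.
by apply: ler_sum => i _; rewrite row_mulmxZ row_mulmx0 row_term_ray_le.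
Qed.

Lemma row_separable_ray_lt x t i : 0 < t < 1 -> (C *m x) i 0 != 0 ->
  B (t *: x) < t * B x + (1 - t) * B 0.
Proof.
move=> t01 ci; rewrite !BE !mulr_sumr -big_split /= (bigD1 i) //= [ltRHS](bigD1 i) //=.
apply: ltr_leD.
  have := strict_support_strict_convex (sigma_support i) t01 ci.
  by rewrite row_mulmxZ row_mulmx0 mulr0 addr0.
apply: ler_sum => j _; rewrite row_mulmxZ row_mulmx0 row_term_ray_le //.
by case/andP: t01 => t0 t1; rewrite !ltW.
Qed.

Hypotheses (B0 : B 0 = 0) (dB : differentiable B 0) (dB0 : forall v, 'd B 0 v = 0).

Lemma row_separable_ge0 x : 0 <= B x.
Proof.
apply: ray_convex_ge0 => // y t /andP[t0 t1].
by have := @row_separable_ray_le y t; rewrite B0 mulr0 addr0; apply; rewrite !ltW.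
Qed.

(* Pull a point [x] violating the [i]-th constraint back along the ray to the
   facet [C^i y = d^i]: by strict convexity [B] is smaller there than at [x]. *)
Lemma row_separable_sublevel_sub_polytope (d : 'cV[R]_q) : (forall i, 0 < d i 0) ->
  [set x | B x <= inf [set B y | y in [set y | exists i, (C *m y) i 0 = d i 0]]]
    `<=` polytope C d.
Proof.
move=> d_gt0 x /= Bx i; rewrite leNgt; apply/negP => dc.
have c0 : 0 < (C *m x) i 0 := lt_trans (d_gt0 i) dc.
set t := d i 0 / (C *m x) i 0.
have t01 : 0 < t < 1 by rewrite divr_gt0 // ltr_pdivrMr // mul1r.
have Bt : B (t *: x) < B x.
  have := row_separable_ray_lt t01 (lt0r_neq0 c0).
  rewrite B0 mulr0 addr0 => /lt_le_trans; apply.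
  by case/andP: t01 => _ /ltW; apply: ler_piMl; exact: row_separable_ge0.
have : inf [set B y | y in [set y | exists i, (C *m y) i 0 = d i 0]] <= B (t *: x).
  apply: ge_inf; first by exists 0 => _ [y _ <-]; exact: row_separable_ge0.
  by exists (t *: x) => //; exists i; rewrite row_mulmxZ /t mulfVK // lt0r_neq0.
by move: Bx => /le_trans/[apply]; rewrite leNgt Bt.
Qed.

End RowSeparable.

Lemma recentered_barrier_row_separable (R : realType) (rk : relax_kind) (delta : R)
    n q (C : 'M[R]_(q, n)) (d : 'cV[R]_q) (rc : recenter R q) :
  relax_kind_ok rk -> 0 < delta -> recenter_ok C d rc ->
  exists sigma slope : 'I_q -> R -> R,
    (forall i, strict_support setT (sigma i) (slope i)) /\
    forall x, recentered_barrier rk delta C d rc x = \sum_(i < q) sigma i ((C *m x) i 0).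
Proof.
move=> rk_ok delta_gt0; set h := relaxed_log rk delta.
have h_support := relaxed_log_strict_support rk_ok delta_gt0.
have m1 : -1 != 0 :> R by rewrite oppr_eq0 oner_eq0.
case: rc => [_|w [w_ge0 _]].
- exists (fun i c => 1 * h (-1 * c + d i 0) + ln (d i 0) + - (d i 0)^-1 * c).
  eexists; split => [i|x]; first exact: strict_support_affine ltr01 m1 h_support.
  by apply: eq_bigr => i _; rewrite /h mul1r mulN1r; ring.
- exists (fun i c => (1 + w i 0) * h (-1 * c + d i 0) + (1 + w i 0) * ln (d i 0) + 0 * c).
  eexists; split => [i|x].
    by apply: strict_support_affine m1 h_support; rewrite ltr_pwDl.
  by apply: eq_bigr => i _; rewrite /h mulN1r; ring.
Qed.

Lemma recentered_barrier_sublevel_sub_polytope (R : realType) (rk : relax_kind)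
    (delta : R) n q (C : 'M[R]_(q, n)) (d : 'cV[R]_q) (rc : recenter R q) :
  relax_kind_ok rk -> 0 < delta -> recenter_ok C d rc -> (forall i, 0 < d i 0) ->
  recentered_barrier rk delta C d rc 0 = 0 ->
  differentiable (recentered_barrier rk delta C d rc) 0 ->
  (forall v, 'd (recentered_barrier rk delta C d rc) 0 v = 0) ->
  [set x | recentered_barrier rk delta C d rc x <= barrier_level rk delta C d rc]
    `<=` polytope C d.
Proof.
move=> rk_ok delta_gt0 rc_ok d_gt0 B0 dB dB0.
have [sigma [slope [sigma_support BE]]] :=
  recentered_barrier_row_separable rk_ok delta_gt0 rc_ok.
exact: row_separable_sublevel_sub_polytope sigma_support BE B0 dB dB0 d d_gt0.
Qed.

Lemma terminal_sublevel_sub (R : realType) (rk : relax_kind) (delta : R) n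
    (phi : 'cV[R]_n -> R) : relax_kind_ok rk -> 0 < delta ->
  [set x | terminal_barrier rk delta phi x <= relax_beta rk delta 0]
    `<=` [set x | phi x <= 1].
Proof.
move=> rk_ok delta_gt0 x /=; apply: contraTT; rewrite -!ltNge => phi1.
have := relaxed_log_decreasing rk_ok delta_gt0 (_ : 1 - phi x < 0).
rewrite /terminal_barrier {1}/relaxed_log (lt_gtF delta_gt0); apply.
by rewrite subr_lt0.
Qed.

Theorem lemma1 (R : realType) (n m qx qu : nat)
  (Cx : 'M[R]_(qx, n)) (dx : 'cV[R]_qx) (Cu : 'M[R]_(qu, m)) (du : 'cV[R]_qu)
  (A : 'M[R]_n) (B : 'M[R]_(n, m)) (K : 'M[R]_(m, n))
  (phi : 'cV[R]_n -> R)
  (rk : relax_kind) (delta : R) (rx : recenter R qx) (ru : recenter R qu) :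
  (* compact polytopes with strictly positive right-hand sides *)
  compact (polytope Cx dx) -> compact (polytope Cu du) ->
  (forall i, 0 < dx i 0) -> (forall j, 0 < du j 0) ->
  (* relaxing function and delta in (0,1] *)
  relax_kind_ok rk -> 0 < delta <= 1 ->
  (* recentering (gradient, or weight with admissible weights) *)
  recenter_ok Cx dx rx -> recenter_ok Cu du ru ->
  (* delta chosen such that the barriers vanish with zero gradient at 0 *)
  recentered_barrier rk delta Cx dx rx 0 = 0 ->
  recentered_barrier rk delta Cu du ru 0 = 0 ->
  differentiable (recentered_barrier rk delta Cx dx rx) 0 ->
  (forall v, 'd (recentered_barrier rk delta Cx dx rx) 0 v = 0) ->
  differentiable (recentered_barrier rk delta Cu du ru) 0 ->
  (forall v, 'd (recentered_barrier rk delta Cu du ru) 0 v = 0) ->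
  (* terminal set function phi: C^1, convex, nonnegative, positive definite,
     and invariant under A_K = A + B K on X_f *)
  (forall x, differentiable phi x) ->
  (forall v, continuous (fun x => 'd phi x v)) ->
  (forall x y (t : R), 0 <= t <= 1 ->
     phi (t *: x + (1 - t) *: y) <= t * phi x + (1 - t) * phi y) ->
  (forall x, 0 <= phi x) -> phi 0 = 0 -> (forall x, x != 0 -> 0 < phi x) ->
  (forall x, phi x <= 1 -> phi ((A + B *m K) *m x) <= phi x) ->
  [/\ [set x | recentered_barrier rk delta Cx dx rx x
                 <= barrier_level rk delta Cx dx rx] `<=` polytope Cx dx,
      [set u | recentered_barrier rk delta Cu du ru u
                 <= barrier_level rk delta Cu du ru] `<=` polytope Cu du
    & [set x | terminal_barrier rk delta phi x <= relax_beta rk delta 0]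
        `<=` [set x | phi x <= 1]].
Proof.
move=> _ _ dx_gt0 du_gt0 rk_ok /andP[delta_gt0 _] rx_ok ru_ok Bx0 Bu0 dBx dBx0 dBu dBu0 *.
split; last exact: terminal_sublevel_sub.
- exact: recentered_barrier_sublevel_sub_polytope.
- exact: recentered_barrier_sublevel_sub_polytope.
Qed.
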